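(* Let $d\ge 2$ and let ${\cal P}=\{\Pi_i,\frac{1}{d^2}\}_{i=1}^{d^2}$ be a symmetric informationally complete (SIC) ensemble on $\mathbb{C}^d$, i.e. $\Pi_i=|\psi_i\rangle\langle\psi_i|$ for unit vectors $\psi_i$ with $|\langle\psi_i|\psi_j\rangle|^2=\frac{1}{d+1}$ for all $i\ne j$, each with probability $1/d^2$. Then the accessible fidelity of ${\cal P}$ is $$F_{\cal P}=\frac{2}{d+1}.$$ Moreover, for any (finite) POVM ${\cal G}=\{G_b\}$ on $\mathbb{C}^d$ consisting of rank-one elements $G_b=g_b|\phi_b\rangle\langle\phi_b|$ ($g_b>0$, $\|\phi_b\|=1$), the achievable fidelity satisfies $F_{\cal P}({\cal G})=\frac{2}{d+1}=F_{\cal P}$, so any such POVM can be used in an optimal eavesdropping strategy.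
   Context: For a POVM ${\cal E}=\{E_b\}$ and a state-reproduction strategy ${\cal M}:b\mapsto\sigma_b$ (density operators), the average fidelity is $F_{\cal P}({\cal E},{\cal M})=\sum_{b,i}\pi_i\,{\rm tr}(\Pi_iE_b)\,{\rm tr}(\Pi_i\sigma_b)$ (here $\pi_i=1/d^2$). The achievable fidelity of ${\cal E}$ is $F_{\cal P}({\cal E})=\sup_{\cal M}F_{\cal P}({\cal E},{\cal M})$, and the accessible fidelity is $F_{\cal P}=\sup_{{\cal E},{\cal M}}F_{\cal P}({\cal E},{\cal M})$. *)

From HB Require Import structures.
From mathcomp Require Import all_boot all_order all_algebra.
From mathcomp Require Import complex.
From mathcomp Require Import reals.
Set Implicit Arguments. Unset Strict Implicit. Unset Printing Implicit Defensive.
Import Order.TTheory GRing.Theory Num.Theory.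
Local Open Scope ring_scope.
Local Open Scope complex_scope.

Section Q.
Variable R : realType.
Local Notation C := R[i].

Definition adjmx (m n : nat) (A : 'M[C]_(m, n)) : 'M[C]_(n, m) :=
  (map_mx Num.conj A)^T.

Definition cdot (d : nat) (u v : 'cV[C]_d) : C := (adjmx u *m v) 0 0.

Definition ketbra (d : nat) (v : 'cV[C]_d) : 'M[C]_d := v *m adjmx v.

Definition psd (d : nat) (A : 'M[C]_d) : Prop :=
  adjmx A = A /\ forall v : 'cV[C]_d, 0 <= cdot v (A *m v).

Definition povm (d n : nat) (E : 'I_n -> 'M[C]_d) : Prop :=
  (forall b, psd (E b)) /\ \sum_(b < n) E b = 1%:M.

Definition density (d : nat) (s : 'M[C]_d) : Prop := psd s /\ \tr s = 1.

Definition SIC (d : nat) (psi : 'I_(d ^ 2) -> 'cV[C]_d) : Prop :=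
  (forall i, cdot (psi i) (psi i) = 1) /\
  (forall i j, i != j ->
     `|cdot (psi i) (psi j)| ^+ 2 = ((d.+1)%:R)^-1).

(* F_P(E, M) = sum_{b,i} pi_i tr(Pi_i E_b) tr(Pi_i sigma_b), pi_i = 1/d^2.
   The value is real; we take its real part to land in R. *)
Definition avg_fidelity (d n : nat) (psi : 'I_(d ^ 2) -> 'cV[C]_d)
    (E : 'I_n -> 'M[C]_d) (M : 'I_n -> 'M[C]_d) : R :=
  complex.Re (\sum_(b < n) \sum_(i < d ^ 2)
        ((d ^ 2)%:R)^-1 * \tr (ketbra (psi i) *m E b)
                        * \tr (ketbra (psi i) *m M b)).

Definition achievable_fidelity (d n : nat) (psi : 'I_(d ^ 2) -> 'cV[C]_d)
    (E : 'I_n -> 'M[C]_d) : R :=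
  reals.sup (fun x : R => exists M : 'I_n -> 'M[C]_d,
         (forall b, density (M b)) /\ x = avg_fidelity psi E M).

Definition accessible_fidelity (d : nat) (psi : 'I_(d ^ 2) -> 'cV[C]_d) : R :=
  reals.sup (fun x : R => exists (n : nat) (E : 'I_n -> 'M[C]_d)
         (M : 'I_n -> 'M[C]_d),
         povm E /\ (forall b, density (M b)) /\ x = avg_fidelity psi E M).

End Q.

From HB Require Import structures.
From mathcomp Require Import all_boot all_order all_algebra.
From mathcomp Require Import complex.
From mathcomp Require Import reals.
From mathcomp Require Import ring.
From mathcomp Require Import classical_sets.
Set Implicit Arguments. Unset Strict Implicit. Unset Printing Implicit Defensive.
Import Order.TTheory GRing.Theory Num.Theory.
Local Open Scope ring_scope.
Local Open Scope complex_scope.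

(* A SIC ensemble is a complex projective 2-design: its fourth-moment tensor
   sum_j Pi_j (x) Pi_j equals d/(d+1) (I + SWAP), because the squared
   Hilbert-Schmidt distance between the two tensors expands into frame
   potentials that the SIC overlaps 1/(d+1) make cancel exactly (Welch-bound
   equality). Hence sum_j tr(Pi_j A) tr(Pi_j B) = d/(d+1) (tr A tr B + tr AB),
   and the average fidelity of (E, M) is
   1/(d(d+1)) sum_b (tr E_b tr s_b + tr(E_b s_b)).  For psd E_b and a density
   s_b, tr(E_b s_b) <= tr E_b, and sum_b tr E_b = d, so this is at most
   2/(d+1), with equality for any rank-one POVM g_b |phi_b><phi_b| and
   s_b = |phi_b><phi_b| (e.g. the standard basis measurement). *)

Section Sesquilinear.
Variables (R : realType) (d : nat).
Local Notation C := R[i].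
Implicit Types (u v w : 'cV[C]_d) (A B : 'M[C]_d).

Lemma adjmxE m n (A : 'M[C]_(m, n)) i j : adjmx A i j = Num.conj (A j i).
Proof. by rewrite /adjmx !mxE. Qed.

Lemma adjmxD m n (A B : 'M[C]_(m, n)) : adjmx (A + B) = adjmx A + adjmx B.
Proof. by apply/matrixP => i j; rewrite !mxE rmorphD. Qed.

Lemma adjmxZ m n a (A : 'M[C]_(m, n)) : adjmx (a *: A) = Num.conj a *: adjmx A.
Proof. by apply/matrixP => i j; rewrite !mxE rmorphM. Qed.

Lemma cdotE u v : cdot u v = \sum_x Num.conj (u x 0) * v x 0.
Proof. by rewrite /cdot mxE; apply: eq_bigr => x _; rewrite adjmxE. Qed.

Lemma conj_cdot u v : Num.conj (cdot u v) = cdot v u.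
Proof.
rewrite !cdotE rmorph_sum; apply: eq_bigr => x _.
by rewrite rmorphM /= conjCK mulrC.
Qed.

Lemma cdotDl u v w : cdot (u + v) w = cdot u w + cdot v w.
Proof. by rewrite /cdot adjmxD mulmxDl mxE. Qed.

Lemma cdotDr u v w : cdot u (v + w) = cdot u v + cdot u w.
Proof. by rewrite /cdot mulmxDr mxE. Qed.

Lemma cdotZl a u v : cdot (a *: u) v = Num.conj a * cdot u v.
Proof. by rewrite /cdot adjmxZ -scalemxAl mxE. Qed.

Lemma cdotZr a u v : cdot u (a *: v) = a * cdot u v.
Proof. by rewrite /cdot -scalemxAr mxE. Qed.

Lemma cdot_delta_mul A p q : cdot (delta_mx p 0) (A *m delta_mx q 0) = A p q.
Proof.
rewrite /cdot; have -> : adjmx (delta_mx p 0 : 'cV[C]_d) = delta_mx 0 p.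
  by apply/matrixP => i j; rewrite !mxE rmorph_nat andbC.
by rewrite -colE -rowE !mxE.
Qed.

Lemma ketbraE v x y : ketbra v x y = v x 0 * Num.conj (v y 0).
Proof. by rewrite /ketbra mxE big_ord1 adjmxE. Qed.

Lemma mxtrace_ketbra v : \tr (ketbra v) = cdot v v.
Proof. by rewrite /ketbra mxtrace_mulC /mxtrace big_ord1. Qed.

Lemma mxtrace_mulE A B : \tr (A *m B) = \sum_x \sum_y A x y * B y x.
Proof. by apply: eq_bigr => x _; rewrite mxE. Qed.

Lemma ketbra_mul_ketbra v : ketbra v *m ketbra v = cdot v v *: ketbra v.
Proof.
by rewrite /ketbra mulmxA -[_ *m v]mulmxA [adjmx v *m v]mx11_scalar mul_mx_scalar -scalemxAl.
Qed.

Lemma cdot_ketbra_mul v w : cdot w (ketbra v *m w) = cdot w v * Num.conj (cdot w v).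
Proof. by rewrite conj_cdot /cdot /ketbra -!mulmxA [adjmx w *m _]mulmxA [LHS]mxE big_ord1. Qed.

Lemma psd_ketbra v : psd (ketbra v).
Proof.
split=> [|w]; last by rewrite cdot_ketbra_mul mul_conjC_ge0.
by apply/matrixP => x y; rewrite adjmxE !ketbraE rmorphM /= conjCK mulrC.
Qed.

Lemma density_ketbra v : cdot v v = 1 -> density (ketbra v).
Proof. by move=> v1; split; [exact: psd_ketbra | rewrite mxtrace_ketbra]. Qed.

End Sesquilinear.

Section Psd.
Variables (R : realType) (d : nat).
Local Notation C := R[i].
Implicit Types (A B : 'M[C]_d).

Lemma psd_adj A p q : psd A -> A q p = Num.conj (A p q).
Proof. by case=> /(congr1 (fun M : 'M[C]_d => M q p)); rewrite adjmxE => ->. Qed.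

Lemma psd_diag_ge0 A p : psd A -> 0 <= A p p.
Proof. by case=> _ /(_ (delta_mx p 0)); rewrite cdot_delta_mul. Qed.

Lemma psd_form2 A p q a b : psd A ->
  0 <= Num.conj a * (a * A p p) + Num.conj a * (b * A p q)
     + (Num.conj b * (a * A q p) + Num.conj b * (b * A q q)).
Proof.
case=> _ /(_ (a *: delta_mx p 0 + b *: delta_mx q 0)).
by rewrite mulmxDr -!scalemxAr !cdotDl !cdotDr !cdotZl !cdotZr !cdot_delta_mul.
Qed.

Lemma psd_minor A p q : psd A -> `|A p q| ^+ 2 <= A p p * A q q.
Proof.
move=> psdA; have hqp := psd_adj p q psdA.
(* With a, b, z := A p p, A q q, A p q, the vectors (b, -z^* ) and (-z, a) give
   b (ab - |z|^2) >= 0 and a (ab - |z|^2) >= 0; if a = b = 0, the vector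
   (1, -z^* ) gives -2 |z|^2 >= 0. *)
have := psd_form2 p q (A q q) (- Num.conj (A p q)) psdA.
have := psd_form2 p q (- A p q) (A p p) psdA.
have := psd_form2 p q 1 (- Num.conj (A p q)) psdA.
have a0 := psd_diag_ge0 p psdA; have b0 := psd_diag_ge0 q psdA.
rewrite hqp normCK !rmorphN /= conjCK rmorph1 (geC0_conj a0) (geC0_conj b0).
move: (A p p) (A q q) (A p q) a0 b0 => a b z a0 b0.
have -> : 1 * (1 * a) + 1 * (- Num.conj z * z)
    + (- z * (1 * Num.conj z) + - z * (- Num.conj z * b))
    = a - (2 - b) * (z * Num.conj z) by ring.
have -> : - Num.conj z * (- z * a) + - Num.conj z * (a * z)
    + (a * (- z * Num.conj z) + a * (a * b)) = a * (a * b - z * Num.conj z) by ring.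
have -> : b * (b * a) + b * (- Num.conj z * z)
    + (- z * (b * Num.conj z) + - z * (- Num.conj z * b))
    = b * (a * b - z * Num.conj z) by ring.
move=> h0 ha hb; rewrite -subr_ge0.
have := addr_ge0 a0 b0; rewrite le0r => /orP[| ab_gt0]; last first.
  by rewrite -(pmulr_rge0 _ ab_gt0) mulrDl addr_ge0.
rewrite paddr_eq0 // => /andP[/eqP a_eq0 /eqP b_eq0].
move: h0; rewrite a_eq0 b_eq0 subr0 sub0r mul0r oppr_ge0 pmulr_rle0 ?ltr0n //.
by move=> zz_le0; rewrite sub0r oppr_ge0.
Qed.

Lemma psd_cross_le A B p q : psd A -> psd B ->
  2 * (`|A p q| * `|B q p|) <= A p p * B q q + A q q * B p p.
Proof.
move=> psdA psdB.
have mA := psd_minor p q psdA; have mB := psd_minor q p psdB.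
have a0 := psd_diag_ge0 p psdA; have b0 := psd_diag_ge0 q psdA.
have a'0 := psd_diag_ge0 p psdB; have b'0 := psd_diag_ge0 q psdB.
set X := A p p * B q q; set Y := A q q * B p p.
have X0 : 0 <= X by apply: mulr_ge0.
have Y0 : 0 <= Y by apply: mulr_ge0.
rewrite -ler_sqr ?nnegrE ?addr_ge0 ?mulr_ge0 //.
apply: (@le_trans _ _ (4 * (X * Y))).
  have -> : X * Y = (A p p * A q q) * (B q q * B p p) by rewrite /X /Y; ring.
  have -> : (2 * (`|A p q| * `|B q p|)) ^+ 2 = 4 * (`|A p q| ^+ 2 * `|B q p| ^+ 2).
    by ring.
  rewrite ler_pM2l ?ltr0n //.
  by apply: ler_pM => //; apply: exprn_ge0.
have -> : (X + Y) ^+ 2 = (X - Y) ^+ 2 + 4 * (X * Y) by ring.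
by rewrite lerDr -realEsqr realB // ger0_real.
Qed.

Lemma mxtrace_mul_psd_real A B : psd A -> psd B ->
  Num.conj (\tr (A *m B)) = \tr (A *m B).
Proof.
move=> psdA psdB; rewrite !mxtrace_mulE rmorph_sum exchange_big /=.
apply: eq_bigr => y _; rewrite rmorph_sum; apply: eq_bigr => x _.
by rewrite rmorphM /= -(psd_adj _ _ psdA) -(psd_adj _ _ psdB) mulrC.
Qed.

Lemma mxtrace_mul_psd_le A B : psd A -> psd B -> \tr (A *m B) <= \tr A * \tr B.
Proof.
move=> psdA psdB.
have real_tr : \tr (A *m B) \is Num.real by rewrite CrealE mxtrace_mul_psd_real.
apply: le_trans (real_ler_norm real_tr) _.
rewrite -(ler_pM2l (ltr0n _ 2 : (0 : C) < 2%:R)).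
have -> : 2 * (\tr A * \tr B) = \sum_x \sum_y (A x x * B y y + A y y * B x x).
  under eq_bigr => x _ do rewrite big_split /=.
  by rewrite big_split /= [X in _ + X]exchange_big /= /mxtrace big_distrlr /= mulr_natl mulr2n.
apply: (@le_trans _ _ (2 * \sum_x \sum_y `|A x y| * `|B y x|)).
  rewrite ler_pM2l ?ltr0n // mxtrace_mulE.
  apply: le_trans (ler_norm_sum _ _ _) _; apply: ler_sum => x _.
  apply: le_trans (ler_norm_sum _ _ _) _; apply: ler_sum => y _.
  by rewrite normrM.
rewrite mulr_sumr; apply: ler_sum => x _; rewrite mulr_sumr; apply: ler_sum => y _.
exact: psd_cross_le.
Qed.

End Psd.

Section FidelitySum.
Variables (R : realType) (d : nat).
Local Notation C := R[i].

Definition fidelity_sum n (E M : 'I_n -> 'M[C]_d) : C :=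
  \sum_b (\tr (E b) * \tr (M b) + \tr (E b *m M b)).

Lemma fidelity_sum_le n (E M : 'I_n -> 'M[C]_d) :
  povm E -> (forall b, density (M b)) -> fidelity_sum E M <= 2 * d%:R.
Proof.
case=> psdE sumE densM; rewrite /fidelity_sum.
have -> : 2 * d%:R = \sum_b (\tr (E b) + \tr (E b)) :> C.
  by rewrite big_split /= -raddf_sum /= sumE mxtrace1 mulr_natl mulr2n.
apply: ler_sum => b _; case: (densM b) => psdM trM.
by rewrite trM mulr1 lerD2l -[leRHS]mulr1 -trM mxtrace_mul_psd_le.
Qed.

Lemma fidelity_sum_rank1 n (g : 'I_n -> R) (phi : 'I_n -> 'cV[C]_d) :
  (forall b, cdot (phi b) (phi b) = 1) ->
  povm (fun b => (g b)%:C *: ketbra (phi b)) ->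
  fidelity_sum (fun b => (g b)%:C *: ketbra (phi b)) (fun b => ketbra (phi b))
  = 2 * d%:R.
Proof.
move=> phi_unit [_ sumG]; rewrite /fidelity_sum.
under eq_bigr do rewrite -scalemxAl ketbra_mul_ketbra phi_unit scale1r mxtrace_ketbra phi_unit mulr1.
by rewrite big_split /= -raddf_sum /= sumG mxtrace1 mulr_natl mulr2n.
Qed.

End FidelitySum.

Section FourfoldSums.
Variables (R : realType) (d : nat).
Local Notation C := R[i].
Implicit Types (f g : 'I_d -> 'I_d -> 'I_d -> 'I_d -> C).

Definition sum4 f : C := \sum_x \sum_y \sum_z \sum_w f x y z w.

Lemma eq_sum4 f g : (forall x y z w, f x y z w = g x y z w) -> sum4 f = sum4 g.
Proof.
move=> fg; apply: eq_bigr => x _; apply: eq_bigr => y _.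
by apply: eq_bigr => z _; apply: eq_bigr => w _.
Qed.

Lemma sum4D f g : sum4 (fun x y z w => f x y z w + g x y z w) = sum4 f + sum4 g.
Proof.
rewrite /sum4 -big_split; apply: eq_bigr => x _; rewrite -big_split.
by apply: eq_bigr => y _; rewrite -big_split; apply: eq_bigr => z _; rewrite -big_split.
Qed.

Lemma sum4Z c f : sum4 (fun x y z w => c * f x y z w) = c * sum4 f.
Proof.
rewrite /sum4 mulr_sumr; apply: eq_bigr => x _; rewrite mulr_sumr.
by apply: eq_bigr => y _; rewrite mulr_sumr; apply: eq_bigr => z _; rewrite mulr_sumr.
Qed.

Lemma conj_sum4 f : Num.conj (sum4 f) = sum4 (fun x y z w => Num.conj (f x y z w)).
Proof.
rewrite /sum4 rmorph_sum; apply: eq_bigr => x _; rewrite rmorph_sum.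
by apply: eq_bigr => y _; rewrite rmorph_sum; apply: eq_bigr => z _; rewrite rmorph_sum.
Qed.

Lemma exchange_sum4 (J : finType) (F : J -> 'I_d -> 'I_d -> 'I_d -> 'I_d -> C) :
  sum4 (fun x y z w => \sum_j F j x y z w) = \sum_j sum4 (F j).
Proof.
rewrite /sum4.
under eq_bigr do under eq_bigr do under eq_bigr do rewrite exchange_big.
under eq_bigr do under eq_bigr do rewrite exchange_big.
by under eq_bigr do rewrite exchange_big; rewrite exchange_big.
Qed.

Lemma sum4_mul2 (a b : 'I_d -> 'I_d -> C) :
  (\sum_x \sum_y a x y) * (\sum_z \sum_w b z w) = sum4 (fun x y z w => a x y * b z w).
Proof.
rewrite /sum4 mulr_suml; apply: eq_bigr => x _; rewrite mulr_suml.
by apply: eq_bigr => y _; rewrite mulr_sumr; apply: eq_bigr => z _; rewrite mulr_sumr.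
Qed.

Lemma psum4_eq0P f : (forall x y z w, 0 <= f x y z w) ->
  sum4 f = 0 -> forall x y z w, f x y z w = 0.
Proof.
move=> f_ge0 f0 x y z w.
have g3 x' y' z' : 0 <= \sum_w' f x' y' z' w' by apply: sumr_ge0.
have g2 x' y' : 0 <= \sum_z' \sum_w' f x' y' z' w' by apply: sumr_ge0.
have g1 x' : 0 <= \sum_y' \sum_z' \sum_w' f x' y' z' w' by apply: sumr_ge0.
have f1 := @psumr_eq0P _ _ _ _ (fun x _ => g1 x) f0 x isT.
have f2 := @psumr_eq0P _ _ _ _ (fun y _ => g2 x y) f1 y isT.
have f3 := @psumr_eq0P _ _ _ _ (fun z _ => g3 x y z) f2 z isT.
exact: @psumr_eq0P _ _ _ _ (fun w _ => f_ge0 x y z w) f3 w isT.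
Qed.

Definition swap_delta (x y z w : 'I_d) : C :=
  ((y == x) && (w == z))%:R + ((w == x) && (z == y))%:R.

Lemma conj_swap_delta x y z w : Num.conj (swap_delta x y z w) = swap_delta x y z w.
Proof. by rewrite rmorphD /= !conjC_nat. Qed.

Lemma sum_natr_eq_mul (I : finType) (j : I) (F : I -> C) :
  \sum_i (i == j)%:R * F i = F j.
Proof. by rewrite (bigD1 j) //= eqxx mul1r big1 ?addr0 // => i /negbTE ->; rewrite mul0r. Qed.

Lemma sum4_swap_delta_mul f : sum4 (fun x y z w => swap_delta x y z w * f x y z w) =
  \sum_x \sum_z f x x z z + \sum_x \sum_y f x y y x.
Proof.
under eq_sum4 => x y z w do rewrite mulrDl [(w == x) && _]andbC -!mulnb !natrM -!mulrA.
rewrite sum4D /sum4; congr (_ + _); apply: eq_bigr => x _.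
  under eq_bigr do under eq_bigr do rewrite -mulr_sumr.
  under eq_bigr do rewrite -mulr_sumr.
  by rewrite sum_natr_eq_mul; apply: eq_bigr => z _; rewrite sum_natr_eq_mul.
apply: eq_bigr => y _; under eq_bigr do rewrite -mulr_sumr.
by rewrite sum_natr_eq_mul sum_natr_eq_mul.
Qed.

Lemma sum4_swap_delta_sq :
  sum4 (fun x y z w => swap_delta x y z w * swap_delta x y z w) = 2 * (d%:R * d.+1%:R).
Proof.
rewrite sum4_swap_delta_mul.
have diag_count (x : 'I_d) : \sum_(z : 'I_d) ((z == x)%:R : C) = 1.
  by rewrite (bigD1 x) //= big1 => [|z /negbTE ->]; rewrite ?eqxx ?addr0.
have -> : \sum_x \sum_z swap_delta x x z z = \sum_(x : 'I_d) (d.+1)%:R.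
  apply: eq_bigr => x _; rewrite /swap_delta; under eq_bigr do rewrite !eqxx !andbb.
  by rewrite big_split /= diag_count sumr_const card_ord natr1.
have -> : \sum_x \sum_y swap_delta x y y x = \sum_(x : 'I_d) (d.+1)%:R.
  apply: eq_bigr => x _; rewrite /swap_delta; under eq_bigr => y do rewrite !eqxx [x == y]eq_sym !andbb.
  by rewrite big_split /= diag_count sumr_const card_ord addrC natr1.
by rewrite sumr_const card_ord; ring.
Qed.

End FourfoldSums.

Arguments swap_delta {R d}.

Section Moments.
Variables (R : realType) (d : nat) (J : finType) (psi : J -> 'cV[R[i]]_d).
Local Notation C := R[i].
Local Notation P j := (ketbra (psi j)).

Lemma conj_ketbra (v : 'cV[C]_d) x y : Num.conj (ketbra v x y) = ketbra v y x.
Proof. by rewrite !ketbraE rmorphM /= conjCK mulrC. Qed.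

Lemma mxtrace_ketbra_mul_ketbra (u v : 'cV[C]_d) :
  \tr (ketbra u *m ketbra v) = `|cdot u v| ^+ 2.
Proof.
rewrite normCK conj_cdot /ketbra mulmxA mxtrace_mulC.
by rewrite -[u *m _ *m v]mulmxA [adjmx v *m (u *m _)]mulmxA /mxtrace big_ord1 mxE big_ord1 mulrC.
Qed.

(* moment4 and swap_delta are the entries at ((x, z), (y, w)) of
   sum_j Pi_j (x) Pi_j and of I + SWAP on C^d (x) C^d. *)
Definition moment4 x y z w : C := \sum_j P j x y * P j z w.

Lemma sum_mxtrace_ketbra_mul (A B : 'M[C]_d) :
  \sum_j \tr (P j *m A) * \tr (P j *m B) =
  sum4 (fun x y z w => moment4 x y z w * (A y x * B w z)).
Proof.
under eq_bigr do rewrite !mxtrace_mulE sum4_mul2.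
rewrite -exchange_sum4; apply: eq_sum4 => x y z w.
by rewrite mulr_suml; apply: eq_bigr => j _; rewrite mulrACA.
Qed.

Lemma sum4_moment4_sqnorm :
  sum4 (fun x y z w => moment4 x y z w * Num.conj (moment4 x y z w)) =
  \sum_j \sum_k (`|cdot (psi j) (psi k)| ^+ 2) ^+ 2.
Proof.
transitivity (\sum_k \sum_j \tr (P j *m P k) * \tr (P j *m P k)).
  under [RHS]eq_bigr do rewrite sum_mxtrace_ketbra_mul.
  rewrite -exchange_sum4; apply: eq_sum4 => x y z w.
  rewrite -mulr_sumr rmorph_sum; congr (_ * _); apply: eq_bigr => k _.
  by rewrite rmorphM /= !conj_ketbra.
by rewrite exchange_big; do 2!apply: eq_bigr => ? _; rewrite mxtrace_ketbra_mul_ketbra.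
Qed.

Hypothesis psi_unit : forall j, cdot (psi j) (psi j) = 1.

Lemma sum4_swap_delta_moment4 :
  sum4 (fun x y z w => swap_delta x y z w * moment4 x y z w) = 2 * #|J|%:R.
Proof.
rewrite sum4_swap_delta_mul /moment4.
under eq_bigr do rewrite exchange_big; under [X in _ + X]eq_bigr do rewrite exchange_big.
rewrite exchange_big [X in _ + X]exchange_big -big_split /= -sumr_const mulr_sumr.
apply: eq_bigr => j _; rewrite -big_distrlr -mxtrace_mulE /=.
rewrite -[\sum_x _]/(\tr (P j)) mxtrace_ketbra_mul_ketbra mxtrace_ketbra psi_unit.
by rewrite normr1 expr1n !mulr1.
Qed.

End Moments.

Section Sic.
Variables (R : realType) (d : nat) (psi : 'I_(d ^ 2) -> 'cV[R[i]]_d).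
Hypothesis sic : SIC psi.
Local Notation C := R[i].
Local Notation P j := (ketbra (psi j)).

Lemma sic_mxtrace_ketbra_mul j k :
  \tr (P j *m P k) = if j == k then 1 else (d.+1%:R)^-1.
Proof.
case: sic => unit overlap; rewrite mxtrace_ketbra_mul_ketbra.
by case: eqVneq => [<- | /overlap //]; rewrite unit normr1 expr1n.
Qed.

Lemma sic_sum4_moment4_sqnorm (e := (d.+1%:R : C)^-1) :
  sum4 (fun x y z w => moment4 psi x y z w * Num.conj (moment4 psi x y z w)) =
  (e ^+ 2 *+ d ^ 2 + (1 - e ^+ 2)) *+ d ^ 2.
Proof.
have sq j k : (`|cdot (psi j) (psi k)| ^+ 2) ^+ 2 = e ^+ 2 + (k == j)%:R * (1 - e ^+ 2).
  rewrite -mxtrace_ketbra_mul_ketbra sic_mxtrace_ketbra_mul eq_sym.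
  by case: eqP => _; rewrite ?expr1n ?mul1r ?mul0r ?addr0 // addrC subrK.
rewrite sum4_moment4_sqnorm.
under eq_bigr do (under eq_bigr do rewrite sq; rewrite big_split /= sum_natr_eq_mul).
by rewrite !sumr_const !card_ord.
Qed.

Lemma sic_moment4 x y z w :
  moment4 psi x y z w = d%:R / d.+1%:R * swap_delta x y z w.
Proof.
set c : C := d%:R / d.+1%:R.
have c_real : Num.conj c = c by rewrite fmorph_div /= !conjC_nat.
pose dev x y z w := moment4 psi x y z w - c * swap_delta x y z w.
suff dev_sq0 : sum4 (fun x y z w => dev x y z w * Num.conj (dev x y z w)) = 0.
  have /eqP := psum4_eq0P (fun x y z w => mul_conjC_ge0 (dev x y z w)) dev_sq0 x y z w.
  by rewrite mul_conjC_eq0 subr_eq0 => /eqP.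
have expand T D : (T - c * D) * (Num.conj T - c * D) =
    T * Num.conj T + - c * (D * Num.conj T) + - c * (D * T) + c ^+ 2 * (D * D).
  by ring.
under eq_sum4 do rewrite /dev rmorphB rmorphM /= c_real conj_swap_delta expand.
rewrite !sum4D !sum4Z sic_sum4_moment4_sqnorm sum4_swap_delta_sq.
under eq_sum4 do rewrite -conj_swap_delta -rmorphM.
rewrite -conj_sum4 sum4_swap_delta_moment4; last by case: sic.
rewrite card_ord rmorphM /= !rmorph_nat /c.
by field; rewrite addrC natr1 pnatr_eq0.
Qed.

Lemma sic_sum_mxtrace_mul (A B : 'M[C]_d) :
  \sum_j \tr (P j *m A) * \tr (P j *m B) =
  d%:R / d.+1%:R * (\tr A * \tr B + \tr (A *m B)).
Proof.
rewrite sum_mxtrace_ketbra_mul.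
under eq_sum4 do rewrite sic_moment4 -[_ * _ * (_ * _)]mulrA.
by rewrite sum4Z sum4_swap_delta_mul -big_distrlr mxtrace_mulE exchange_big.
Qed.

Lemma avg_fidelity_sicE n (E M : 'I_n -> 'M[C]_d) :
  avg_fidelity psi E M =
  complex.Re ((d ^ 2)%:R^-1 * (d%:R / d.+1%:R) * fidelity_sum E M).
Proof.
rewrite /avg_fidelity /fidelity_sum mulr_sumr; congr complex.Re; apply: eq_bigr => b _.
by rewrite -mulrA -sic_sum_mxtrace_mul mulr_sumr; apply: eq_bigr => j _; rewrite mulrA.
Qed.

End Sic.

Section SicFidelity.
Variables (R : realType) (d : nat) (psi : 'I_(d ^ 2) -> 'cV[R[i]]_d).
Hypotheses (sic : SIC psi) (d_gt0 : (0 < d)%N).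
Local Notation C := R[i].

Lemma sic_fidelity_scale :
  (d ^ 2)%:R^-1 * (d%:R / d.+1%:R) * (2 * d%:R) = (2 / d.+1%:R : R)%:C :> C.
Proof.
rewrite fmorph_div /= !rmorph_nat natrX.
have d_neq0 : d%:R != 0 :> C by rewrite pnatr_eq0 -lt0n.
by field; rewrite d_neq0 andbT addrC natr1 pnatr_eq0.
Qed.

Lemma avg_fidelity_sic_le n (E M : 'I_n -> 'M[C]_d) :
  povm E -> (forall b, density (M b)) -> avg_fidelity psi E M <= 2 / d.+1%:R.
Proof.
move=> povmE densM; rewrite avg_fidelity_sicE //.
have k_gt0 : 0 < (d ^ 2)%:R^-1 * (d%:R / d.+1%:R) :> C.
  by rewrite !mulr_gt0 ?invr_gt0 ?ltr0n ?expn_gt0 ?d_gt0.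
have := fidelity_sum_le povmE densM; rewrite -(ler_pM2l k_gt0) sic_fidelity_scale.
by rewrite lecE => /andP[_].
Qed.

Lemma avg_fidelity_sic_rank1 n (g : 'I_n -> R) (phi : 'I_n -> 'cV[C]_d) :
  (forall b, cdot (phi b) (phi b) = 1) ->
  povm (fun b => (g b)%:C *: ketbra (phi b)) ->
  avg_fidelity psi (fun b => (g b)%:C *: ketbra (phi b)) (fun b => ketbra (phi b))
  = 2 / d.+1%:R.
Proof.
by move=> phi_unit povmG; rewrite avg_fidelity_sicE // fidelity_sum_rank1 // sic_fidelity_scale.
Qed.

End SicFidelity.

Lemma sup_eq_max (R : realType) (S : set R) x :
  S x -> (forall y, S y -> y <= x) -> reals.sup S = x.
Proof.
move=> Sx S_le; apply/le_anti/andP; split; first by apply: ge_sup; [exists x | exact: S_le].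
by apply: ub_le_sup => //; exists x => y /S_le.
Qed.

Section StandardBasis.
Variables (R : realType) (d : nat).
Local Notation C := R[i].

Lemma cdot_delta (p : 'I_d) : cdot (delta_mx p 0) (delta_mx p 0 : 'cV[C]_d) = 1.
Proof. by rewrite -[X in cdot _ X]mul1mx cdot_delta_mul mxE eqxx. Qed.

Lemma povm_delta : povm (fun p : 'I_d => (1 : R)%:C *: ketbra (delta_mx p 0 : 'cV[C]_d)).
Proof.
rewrite -[(1 : R)%:C]/(1 : C); split=> [p | ]; first by rewrite scale1r; apply: psd_ketbra.
rewrite [RHS]scalar_mx_sum_delta; apply: eq_bigr => p _; rewrite !scale1r.
by apply/matrixP => x y; rewrite ketbraE !mxE !andbT rmorph_nat -natrM mulnb.
Qed.

End StandardBasis.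

Theorem theorem3 (R : realType) (d : nat) (hd : (2 <= d)%N)
    (psi : 'I_(d ^ 2) -> 'cV[R[i]]_d) (hsic : SIC psi) :
  accessible_fidelity psi = 2 / (d.+1)%:R /\
  forall (n : nat) (g : 'I_n -> R) (phi : 'I_n -> 'cV[R[i]]_d),
    (forall b, 0 < g b) ->
    (forall b, cdot (phi b) (phi b) = 1) ->
    povm (fun b => (g b)%:C *: ketbra (phi b)) ->
    achievable_fidelity psi (fun b => (g b)%:C *: ketbra (phi b))
      = 2 / (d.+1)%:R.
Proof.
have d_gt0 : (0 < d)%N by apply: leq_trans hd.
split=> [|n g phi _ phi_unit povmG]; apply: sup_eq_max.
- exists d, (fun p => (1 : R)%:C *: ketbra (delta_mx p 0)), (fun p => ketbra (delta_mx p 0)).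
  split; first exact: povm_delta.
  split; first by move=> p; apply/density_ketbra/cdot_delta.
  by rewrite avg_fidelity_sic_rank1 //; [exact: cdot_delta | exact: povm_delta].
- by move=> _ [n [E [M [povmE [densM ->]]]]]; apply: avg_fidelity_sic_le.
- exists (fun b => ketbra (phi b)); split; first by move=> b; apply: density_ketbra.
  by rewrite avg_fidelity_sic_rank1.
- by move=> _ [M [densM ->]]; apply: avg_fidelity_sic_le.
Qed.
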